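(* Let $\lambda\in ba(\mathcal A)$, $\mathscr M\subset ba(\mathcal A,\lambda)$, and let $\mathscr H_0\subset\mathcal A$ generate the ring $\mathscr H$. There exist $H_1,H_2,\ldots\in\mathscr H_0$ such that, with $G_n=H_n\setminus\bigcup_{k<n}H_k$ and $G=\bigcap_nH_n^c$, $$|\mu|^*(H\cap G)=0\quad\text{and}\quad\mu(A\cap H)=\sum_n\mu(A\cap H\cap G_n)\qquad\mu\in\mathscr M,\ A\in\mathcal A,\ H\in\mathscr H.$$ Moreover: (i) if $\mu\in\mathscr M$ is $\mathscr H_0$-inner regular, then $\mu(A)=\sum_n\mu(A\cap G_n)$ for all $A\in\mathcal A$; (ii) if $\mathscr H_0$ is closed under countable unions, then $\mu(A)=\mu(A\cap G)+\sum_n\mu(A\cap G_n)$ for all $\mu\in\mathscr M$, $A\in\mathcal A$.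
   Context: $\mathcal A$ algebra of subsets of $\Omega$; $ba(\mathcal A)$ bounded finitely additive real set functions, $|\mu|$ total variation, $\mu^+,\mu^-$ positive and negative parts. $ba(\mathcal A,\lambda)=\{\mu:\mu\ll\lambda\}$, where $\mu\ll\lambda$ means for every $\varepsilon>0$ there is $\delta>0$ with $|\lambda|(A)<\delta\Rightarrow|\mu|(A)<\varepsilon$. $|\mu|^*(E)=\inf\{|\mu|(A):A\in\mathcal A,\ E\subset A\}$ is the outer measure for $E\subset\Omega$. $\mu$ is $\mathscr H_0$-inner regular if $\mu^+(A)=\sup\{\mu(H):H\in\mathscr H_0,\ H\subset A\}$ and $\mu^-(A)=\sup\{-\mu(H):H\in\mathscr H_0,\ H\subset A\}$ for all $A\in\mathcal A$. *)

From Stdlib Require Import Reals List ClassicalEpsilon.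
Open Scope R_scope.

Definition set (T : Type) := T -> Prop.

Definition setI {T} (A B : set T) : set T := fun x => A x /\ B x.
Definition setU {T} (A B : set T) : set T := fun x => A x \/ B x.
Definition setD {T} (A B : set T) : set T := fun x => A x /\ ~ B x.
Definition setC {T} (A : set T) : set T := fun x => ~ A x.
Definition set0 {T} : set T := fun _ => False.
Definition setT {T} : set T := fun _ => True.
Definition subset {T} (A B : set T) : Prop := forall x, A x -> B x.
Definition disjoint {T} (A B : set T) : Prop := forall x, A x -> B x -> False.

Definition is_algebra {T} (Alg : set T -> Prop) : Prop :=
  Alg setT /\ (forall A, Alg A -> Alg (setC A)) /\
  (forall A B, Alg A -> Alg B -> Alg (setU A B)).

Definition is_ring {T} (Rg : set T -> Prop) : Prop :=
  Rg set0 /\ (forall A B, Rg A -> Rg B -> Rg (setU A B)) /\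
  (forall A B, Rg A -> Rg B -> Rg (setD A B)).

Definition gen_ring {T} (H0 : set T -> Prop) (H : set T) : Prop :=
  forall Rg, is_ring Rg -> (forall X, H0 X -> Rg X) -> Rg H.

Definition is_ba {T} (Alg : set T -> Prop) (mu : set T -> R) : Prop :=
  (forall A B, Alg A -> Alg B -> disjoint A B -> mu (setU A B) = mu A + mu B) /\
  (exists K, forall A, Alg A -> Rabs (mu A) <= K).

(* Supremum / infimum of a set of reals (chosen; meaningful when they exist). *)
Definition is_glb (E : R -> Prop) (m : R) : Prop :=
  (forall x, E x -> m <= x) /\ (forall b, (forall x, E x -> b <= x) -> b <= m).
Definition Rsup (E : R -> Prop) : R := epsilon (inhabits 0) (fun m => is_lub E m).
Definition Rinf (E : R -> Prop) : R := epsilon (inhabits 0) (fun m => is_glb E m).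

Definition is_partition {T} (Alg : set T -> Prop) (A : set T) (l : list (set T)) : Prop :=
  Forall Alg l /\
  (forall x, A x <-> exists B, In B l /\ B x) /\
  (forall i j, (i < length l)%nat -> (j < length l)%nat -> i <> j ->
     disjoint (nth i l set0) (nth j l set0)).

Definition totvar {T} (Alg : set T -> Prop) (mu : set T -> R) (A : set T) : R :=
  Rsup (fun r => exists l, is_partition Alg A l /\
                  r = fold_right Rplus 0 (map (fun B => Rabs (mu B)) l)).

Definition mu_pos {T} (Alg : set T -> Prop) (mu : set T -> R) (A : set T) : R :=
  Rsup (fun r => exists B, Alg B /\ subset B A /\ r = mu B).
Definition mu_neg {T} (Alg : set T -> Prop) (mu : set T -> R) (A : set T) : R :=
  Rsup (fun r => exists B, Alg B /\ subset B A /\ r = - mu B).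

Definition abs_cont {T} (Alg : set T -> Prop) (mu lam : set T -> R) : Prop :=
  forall eps, eps > 0 -> exists delta, delta > 0 /\
    forall A, Alg A -> totvar Alg lam A < delta -> totvar Alg mu A < eps.

Definition outer {T} (Alg : set T -> Prop) (mu : set T -> R) (E : set T) : R :=
  Rinf (fun r => exists A, Alg A /\ subset E A /\ r = totvar Alg mu A).

Definition inner_regular {T} (Alg H0 : set T -> Prop) (mu : set T -> R) : Prop :=
  forall A, Alg A ->
    is_lub (fun r => exists H, H0 H /\ subset H A /\ r = mu H) (mu_pos Alg mu A) /\
    is_lub (fun r => exists H, H0 H /\ subset H A /\ r = - mu H) (mu_neg Alg mu A).

Definition Gn {T} (Hs : nat -> set T) (n : nat) : set T :=
  fun x => Hs n x /\ ~ (exists k, (k < n)%nat /\ Hs k x).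
Definition Gset {T} (Hs : nat -> set T) : set T := fun x => forall n, ~ Hs n x.

(* Write v := lam^+ + lam^- for the variation content of lam; it is a bounded,
   nonnegative, finitely additive set function on Alg dominating |lam|.  The proof
   rests on one combinatorial fact about such contents v (Lemma exhausting_sequence):
   a greedy choice of H_n in H0, each nearly maximising v(H \ (H_1 u ... u H_{n-1})),
   produces a sequence whose partial unions U_n exhaust every member of H0
   UNIFORMLY, i.e.  sup_{X in H0} v(X \ U_n) -> 0.  The sets B with
   v(B \ U_n) -> 0 form a ring, so every H in the ring generated by H0 is exhausted.
   Absolute continuity then turns "v(B \ U_n) small" into "|mu|(B \ U_n) small" for
   every mu in M, which gives, for H in the generated ring,
   - |mu|^*(H n G) = 0, because H n G lies in H \ U_n for every n;
   - mu(A n H) = sum_n mu(A n H n G_n), the partial sums being mu(A n H n U_{n+1}).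
   Part (i) uses inner regularity to bound |mu(A \ U_n)| by the uniform estimate on
   the members of H0 inside A \ U_n, and part (ii) applies the series to H = U_n H_n,
   which lies in H0 and whose complement is G. *)

From Stdlib Require Import Reals Lra Lia List Classical FunctionalExtensionality
  PropExtensionality ClassicalEpsilon.
Open Scope R_scope.

Lemma set_ext {T} (A B : set T) : (forall x, A x <-> B x) -> A = B.
Proof.
  intros H; apply functional_extensionality; intros x.
  apply propositional_extensionality; auto.
Qed.

Lemma approx_sup (E : R -> Prop) :
  (exists b, forall x, E x -> x <= b) -> (exists x, E x) ->
  forall eps, 0 < eps -> exists x, E x /\ forall y, E y -> y <= x + eps.
Proof.
  intros [b Hb] Hne eps Heps.
  destruct (completeness E) as [m [Hub Hlub]]; [exists b; exact Hb | exact Hne |].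
  apply NNPP; intros Hnone.
  assert (Hm : m <= m - eps); [|lra].
  apply Hlub; intros y Ey.
  apply Rnot_lt_le; intros Hy; apply Hnone.
  exists y; split; auto.
  intros z Ez; pose proof (Hub z Ez); lra.
Qed.

Lemma Rsup_lub (E : R -> Prop) :
  (exists b, forall x, E x -> x <= b) -> (exists x, E x) -> is_lub E (Rsup E).
Proof.
  intros [b Hb] Hne. unfold Rsup. apply epsilon_spec.
  destruct (completeness E) as [m Hm]; [exists b; exact Hb | exact Hne |].
  exists m; exact Hm.
Qed.

Lemma Rinf_eq (E : R -> Prop) m : is_glb E m -> Rinf E = m.
Proof.
  intros Hm. unfold Rinf.
  assert (Hc : is_glb E (epsilon (inhabits 0) (fun m => is_glb E m))).
  { apply epsilon_spec. exists m; exact Hm. }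
  destruct Hm as [Hm1 Hm2], Hc as [Hc1 Hc2]. apply Rle_antisym; auto.
Qed.

Section Algebra.
Context {T : Type} (Alg : set T -> Prop).
Hypothesis HA : is_algebra Alg.

Lemma alg_C A : Alg A -> Alg (setC A).
Proof. destruct HA as [_ [HC _]]; auto. Qed.

Lemma alg_U A B : Alg A -> Alg B -> Alg (setU A B).
Proof. destruct HA as [_ [_ HU]]; auto. Qed.

Lemma alg_I A B : Alg A -> Alg B -> Alg (setI A B).
Proof.
  intros HAa HBb.
  replace (setI A B) with (setC (setU (setC A) (setC B))).
  - apply alg_C, alg_U; apply alg_C; assumption.
  - apply set_ext; intro x; unfold setC, setU, setI; tauto.
Qed.

Lemma alg_D A B : Alg A -> Alg B -> Alg (setD A B).
Proof.
  intros HAa HBb. replace (setD A B) with (setI A (setC B)).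
  - apply alg_I; [assumption | apply alg_C; assumption].
  - apply set_ext; intro x; unfold setC, setD, setI; tauto.
Qed.

Lemma alg_0 : Alg set0.
Proof.
  replace set0 with (setC (@setT T)).
  - apply alg_C. destruct HA as [HT _]; exact HT.
  - apply set_ext; intro x; unfold setC, setT, set0; tauto.
Qed.

End Algebra.

(* Membership goals "Alg X" have a variable head, so the closure lemmas are
   registered as pattern-driven hints. *)
#[export] Hint Extern 2 =>
  match goal with
  | |- _ (setC _) => simple eapply alg_C
  | |- _ (setU _ _) => simple eapply alg_U
  | |- _ (setI _ _) => simple eapply alg_I
  | |- _ (setD _ _) => simple eapply alg_D
  | |- _ set0 => simple eapply alg_0
  end : core.

Section FinitelyAdditive.
Context {T : Type} (Alg : set T -> Prop) (nu : set T -> R).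
Hypothesis HA : is_algebra Alg.
Hypothesis Hnu : is_ba Alg nu.

Lemma ba_add A B : Alg A -> Alg B -> disjoint A B -> nu (setU A B) = nu A + nu B.
Proof. destruct Hnu as [Hadd _]; auto. Qed.

Lemma ba_0 : nu set0 = 0.
Proof.
  assert (E : setU (@set0 T) set0 = set0) by (apply set_ext; unfold setU, set0; tauto).
  pose proof (ba_add set0 set0) as Hadd. rewrite E in Hadd.
  assert (nu set0 = nu set0 + nu set0) by (apply Hadd; auto; intros x []). lra.
Qed.

Lemma ba_split C U : Alg C -> Alg U -> nu C = nu (setI C U) + nu (setD C U).
Proof.
  intros HC HU. rewrite <- ba_add; auto.
  - f_equal. apply set_ext; intro x; unfold setU, setI, setD.
    destruct (classic (U x)); tauto.
  - intros x [_ h1] [_ h2]; auto.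
Qed.

Lemma ba_mono (Hpos : forall A, Alg A -> 0 <= nu A) A B :
  Alg A -> Alg B -> subset B A -> nu B <= nu A.
Proof.
  intros HAa HBb Hsub. rewrite (ba_split A B); auto.
  replace (setI A B) with B
    by (apply set_ext; intro x; unfold setI; split; [intro h; split; auto | tauto]).
  assert (HD : Alg (setD A B)) by auto. pose proof (Hpos _ HD). lra.
Qed.

Lemma ba_bounded_above : exists K, forall A, Alg A -> nu A <= K.
Proof.
  destruct Hnu as [_ [K HK]]. exists K. intros A HAa.
  pose proof (Rle_abs (nu A)); pose proof (HK A HAa); lra.
Qed.

Lemma ba_opp : is_ba Alg (fun B => - nu B).
Proof.
  destruct Hnu as [Hadd [K HK]]. split.
  - intros A B HAa HBb Hd. rewrite Hadd; auto. lra.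
  - exists K. intros A HAa. rewrite Rabs_Ropp. auto.
Qed.

End FinitelyAdditive.

Section PositiveVariation.
Context {T : Type} (Alg : set T -> Prop) (nu : set T -> R).
Hypothesis HA : is_algebra Alg.
Hypothesis Hnu : is_ba Alg nu.

Lemma mu_pos_lub A : Alg A ->
  is_lub (fun r => exists B, Alg B /\ subset B A /\ r = nu B) (mu_pos Alg nu A).
Proof.
  intros HAa. apply Rsup_lub.
  - destruct (ba_bounded_above Alg nu Hnu) as [K HK].
    exists K. intros x [B [HB [_ ->]]]. auto.
  - exists (nu A), A. repeat split; auto. intros x h; exact h.
Qed.

Lemma mu_pos_ge A B : Alg A -> Alg B -> subset B A -> nu B <= mu_pos Alg nu A.
Proof. intros HAa HBb Hsub. apply (mu_pos_lub A HAa). exists B; auto. Qed.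

Lemma mu_pos_le A c : Alg A ->
  (forall B, Alg B -> subset B A -> nu B <= c) -> mu_pos Alg nu A <= c.
Proof. intros HAa Hc. apply (mu_pos_lub A HAa). intros x [B [HB [Hsub ->]]]. auto. Qed.

Lemma mu_pos_nonneg A : Alg A -> 0 <= mu_pos Alg nu A.
Proof.
  intros HAa. rewrite <- (ba_0 Alg nu HA Hnu). apply mu_pos_ge; auto. intros x [].
Qed.

Lemma mu_pos_bounded : exists K, forall A, Alg A -> mu_pos Alg nu A <= K.
Proof.
  destruct (ba_bounded_above Alg nu Hnu) as [K HK].
  exists K. intros A HAa. apply mu_pos_le; auto.
Qed.

Lemma mu_pos_add A1 A2 : Alg A1 -> Alg A2 -> disjoint A1 A2 ->
  mu_pos Alg nu (setU A1 A2) = mu_pos Alg nu A1 + mu_pos Alg nu A2.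
Proof.
  intros H1 H2 Hd.
  assert (H12 : Alg (setU A1 A2)) by auto.
  apply Rle_antisym.
  - apply mu_pos_le; auto. intros B HB Hsub.
    assert (Hsplit : B = setU (setI B A1) (setI B A2)).
    { apply set_ext; intro x; unfold setU, setI; split; [|tauto].
      intro h. destruct (Hsub x h); tauto. }
    rewrite Hsplit, (ba_add Alg nu Hnu); auto.
    + apply Rplus_le_compat; apply mu_pos_ge; auto; intros x [_ h]; exact h.
    + intros x [_ h1] [_ h2]. exact (Hd x h1 h2).
  -
    assert (Hpair : forall B2, Alg B2 -> subset B2 A2 ->
              mu_pos Alg nu A1 <= mu_pos Alg nu (setU A1 A2) - nu B2).
    { intros B2 HB2 Hs2. apply mu_pos_le; auto. intros B1 HB1 Hs1.
      assert (Hunion : nu (setU B1 B2) <= mu_pos Alg nu (setU A1 A2)).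
      { apply mu_pos_ge; auto. intros x [h|h]; [left | right]; auto. }
      rewrite (ba_add Alg nu Hnu) in Hunion; auto; [lra|].
      intros x h1 h2. exact (Hd x (Hs1 x h1) (Hs2 x h2)). }
    assert (mu_pos Alg nu A2 <= mu_pos Alg nu (setU A1 A2) - mu_pos Alg nu A1).
    { apply mu_pos_le; auto. intros B2 HB2 Hs2. specialize (Hpair B2 HB2 Hs2). lra. }
    lra.
Qed.

End PositiveVariation.

(* The variation content nu^+ + nu^- (in fact equal to |nu|); it dominates the total
   variation, and unlike |nu| its additivity is immediate from that of nu^+. *)
Definition variation {T} (Alg : set T -> Prop) (nu : set T -> R) (A : set T) : R :=
  mu_pos Alg nu A + mu_neg Alg nu A.

Lemma mu_neg_eq {T} (Alg : set T -> Prop) (nu : set T -> R) A :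
  mu_neg Alg nu A = mu_pos Alg (fun B => - nu B) A.
Proof. reflexivity. Qed.

Section TotalVariation.
Context {T : Type} (Alg : set T -> Prop) (nu : set T -> R).
Hypothesis HA : is_algebra Alg.
Hypothesis Hnu : is_ba Alg nu.

Definition union_list (l : list (set T)) : set T := fun x => exists P, In P l /\ P x.

(* The sum of |nu P| over a disjoint list equals nu B - nu C, where B (resp. C) is the
   union of the pieces on which nu is nonnegative (resp. negative). *)
Lemma partition_sum_split (l : list (set T)) :
  Forall Alg l ->
  (forall i j, (i < length l)%nat -> (j < length l)%nat -> i <> j ->
     disjoint (nth i l set0) (nth j l set0)) ->
  exists B C, Alg B /\ Alg C /\ subset B (union_list l) /\ subset C (union_list l) /\
    fold_right Rplus 0 (map (fun P => Rabs (nu P)) l) = nu B - nu C.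
Proof.
  induction l as [|P l IH]; intros Hf Hd.
  - exists set0, set0. repeat split; auto; try (intros x []). simpl. ring.
  - inversion Hf as [|? ? HP Hl]; subst.
    destruct IH as [B [C [HB [HC [HsB [HsC Hsum]]]]]]; auto.
    { intros i j hi hj ne. apply (Hd (S i) (S j)); simpl; lia. }
    assert (HdP : forall D, subset D (union_list l) -> disjoint P D).
    { intros D HsD x hx hD. destruct (HsD x hD) as [Q [iQ hQ]].
      destruct (In_nth l Q set0 iQ) as [j [hj ej]].
      refine (Hd 0%nat (S j) _ _ _ x _ _); simpl; try lia; [exact hx | rewrite ej; exact hQ]. }
    assert (Hwiden : forall D, subset D (union_list l) -> subset D (union_list (P :: l))).
    { intros D HsD x hx. destruct (HsD x hx) as [Q [iQ hQ]]. exists Q; simpl; auto. }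
    assert (HPin : subset P (union_list (P :: l))) by (intros x hx; exists P; simpl; auto).
    simpl. rewrite Hsum.
    destruct (Rle_dec 0 (nu P)) as [Hp|Hn].
    + exists (setU P B), C. repeat split; auto.
      * intros x [h|h]; [apply HPin | apply (Hwiden B HsB)]; exact h.
      * rewrite (ba_add Alg nu Hnu); auto. rewrite Rabs_right; lra.
    + exists B, (setU P C). repeat split; auto.
      * intros x [h|h]; [apply HPin | apply (Hwiden C HsC)]; exact h.
      * rewrite (ba_add Alg nu Hnu); auto. rewrite Rabs_left; lra.
Qed.

Lemma singleton_partition A : Alg A -> is_partition Alg A (A :: nil).
Proof.
  intros HAa. split; [constructor; auto|]. split.
  - intros x; split; [intro h; exists A; simpl; auto | intros [B [[<-|[]] h]]; auto].
  - intros i j hi hj ne. simpl in hi, hj. lia.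
Qed.

Lemma totvar_lub A : Alg A ->
  is_lub (fun r => exists l, is_partition Alg A l /\
                  r = fold_right Rplus 0 (map (fun B => Rabs (nu B)) l)) (totvar Alg nu A).
Proof.
  intros HAa. apply Rsup_lub.
  - destruct Hnu as [_ [K HK]]. exists (2 * K). intros r [l [[Hf [_ Hd]] ->]].
    destruct (partition_sum_split l Hf Hd) as [B [C [HB [HC [_ [_ ->]]]]]].
    pose proof (HK B HB); pose proof (HK C HC).
    pose proof (Rle_abs (nu B)); pose proof (Rle_abs (- nu C)); rewrite Rabs_Ropp in *. lra.
  - exists (Rabs (nu A) + 0), (A :: nil). split; [apply singleton_partition; auto | reflexivity].
Qed.

Lemma abs_le_totvar A : Alg A -> Rabs (nu A) <= totvar Alg nu A.
Proof.
  intros HAa. replace (Rabs (nu A)) with (Rabs (nu A) + 0) by ring.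
  apply (totvar_lub A HAa). exists (A :: nil).
  split; [apply singleton_partition; auto | reflexivity].
Qed.

Lemma totvar_nonneg A : Alg A -> 0 <= totvar Alg nu A.
Proof. intros HAa. eapply Rle_trans; [apply Rabs_pos | apply abs_le_totvar; auto]. Qed.

(* |nu|(A) <= nu^+(A) + nu^-(A): split a partition into its positive and negative pieces. *)
Lemma totvar_le_variation A : Alg A -> totvar Alg nu A <= variation Alg nu A.
Proof.
  intros HAa. apply (totvar_lub A HAa). intros r [l [[Hf [Hc Hd]] ->]].
  destruct (partition_sum_split l Hf Hd) as [B [C [HB [HC [HsB [HsC ->]]]]]].
  assert (nu B <= mu_pos Alg nu A).
  { apply (mu_pos_ge Alg nu Hnu); auto. intros x h. apply Hc, HsB, h. }
  assert (- nu C <= mu_neg Alg nu A).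
  { apply (mu_pos_ge Alg (fun B => - nu B) (ba_opp Alg nu Hnu)); auto.
    intros x h. apply Hc, HsC, h. }
  unfold variation. lra.
Qed.

Lemma variation_nonneg A : Alg A -> 0 <= variation Alg nu A.
Proof.
  intros HAa. unfold variation.
  pose proof (mu_pos_nonneg Alg nu HA Hnu A HAa).
  pose proof (mu_pos_nonneg Alg (fun B => - nu B) HA (ba_opp Alg nu Hnu) A HAa).
  rewrite mu_neg_eq. lra.
Qed.

Lemma variation_ba : is_ba Alg (variation Alg nu).
Proof.
  split.
  - intros A B HAa HBb Hd. unfold variation. rewrite !mu_neg_eq.
    rewrite (mu_pos_add Alg nu HA Hnu), (mu_pos_add Alg (fun B => - nu B) HA (ba_opp Alg nu Hnu));
      auto.
    ring.
  - destruct (mu_pos_bounded Alg nu Hnu) as [K1 HK1].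
    destruct (mu_pos_bounded Alg (fun B => - nu B) (ba_opp Alg nu Hnu)) as [K2 HK2].
    exists (K1 + K2). intros A HAa.
    rewrite Rabs_right by (apply Rle_ge, variation_nonneg; auto).
    unfold variation. rewrite mu_neg_eq. pose proof (HK1 A HAa); pose proof (HK2 A HAa). lra.
Qed.

End TotalVariation.

Definition Upto {T} (Hs : nat -> set T) (n : nat) : set T :=
  fun x => exists k, (k < n)%nat /\ Hs k x.

Section PartialUnions.
Context {T : Type} (Hs : nat -> set T).

Lemma Gn_Upto n : Gn Hs n = setD (Hs n) (Upto Hs n).
Proof. apply set_ext; intro x. unfold Gn, setD, Upto. tauto. Qed.

Lemma Upto_0 : Upto Hs 0 = set0.
Proof. apply set_ext; intro x; unfold Upto, set0. split; [intros [k [Hk _]]; lia | intros []]. Qed.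

Lemma Upto_succ n : Upto Hs (S n) = setU (Upto Hs n) (Hs n).
Proof.
  apply set_ext; intro x; unfold Upto, setU. split.
  - intros [k [Hk Hx]]. destruct (Nat.eq_dec k n) as [->|Hne]; [right; exact Hx|].
    left; exists k; split; auto; lia.
  - intros [[k [Hk Hx]]|Hx]; [exists k; split; auto; lia | exists n; split; auto].
Qed.

Lemma Upto_succ_Gn n : Upto Hs (S n) = setU (Upto Hs n) (Gn Hs n).
Proof.
  rewrite Upto_succ, Gn_Upto. apply set_ext; intro x; unfold setU, setD.
  destruct (classic (Upto Hs n x)); tauto.
Qed.

Lemma Upto_Gn_disjoint n : disjoint (Upto Hs n) (Gn Hs n).
Proof. rewrite Gn_Upto. intros x h [_ h']. auto. Qed.

Lemma Upto_mono n m : (n <= m)%nat -> subset (Upto Hs n) (Upto Hs m).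
Proof. intros Hnm x [k [Hk Hx]]. exists k; split; auto; lia. Qed.

Lemma Gset_out_of_Upto B n : subset (setI B (Gset Hs)) (setD B (Upto Hs n)).
Proof. intros x [HB HG]. split; auto. intros [k [_ Hk]]. exact (HG k Hk). Qed.

Lemma Gset_complement : Gset Hs = setC (fun x => exists n, Hs n x).
Proof.
  apply set_ext; intro x; unfold Gset, setC. split.
  - intros HG [n Hn]. exact (HG n Hn).
  - intros HG n Hn. apply HG; eauto.
Qed.

Variable Alg : set T -> Prop.
Hypothesis HA : is_algebra Alg.
Hypothesis HsAlg : forall n, Alg (Hs n).

Lemma Upto_alg n : Alg (Upto Hs n).
Proof. induction n; [rewrite Upto_0 | rewrite Upto_succ]; auto. Qed.

Lemma Gn_alg n : Alg (Gn Hs n).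
Proof. rewrite Gn_Upto. apply alg_D; auto. apply Upto_alg. Qed.

End PartialUnions.

#[export] Hint Extern 2 =>
  match goal with
  | |- _ (Upto _ _) => simple eapply Upto_alg
  | |- _ (Gn _ _) => simple eapply Gn_alg
  end : core.

Section SeriesAlongPieces.
Context {T : Type} (Alg : set T -> Prop) (nu : set T -> R) (Hs : nat -> set T).
Hypothesis HA : is_algebra Alg.
Hypothesis Hnu : is_ba Alg nu.
Hypothesis HsAlg : forall n, Alg (Hs n).

Lemma partial_sum_pieces C : Alg C -> forall n,
  sum_f_R0 (fun k => nu (setI C (Gn Hs k))) n = nu (setI C (Upto Hs (S n))).
Proof.
  intros HC.
  assert (Hstep : forall m, nu (setI C (Upto Hs (S m))) =
                            nu (setI C (Upto Hs m)) + nu (setI C (Gn Hs m))).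
  { intro m. rewrite Upto_succ_Gn, <- (ba_add Alg nu Hnu); auto.
    - f_equal. apply set_ext; intro x; unfold setI, setU; tauto.
    - intros x [_ h1] [_ h2]. exact (Upto_Gn_disjoint Hs m x h1 h2). }
  induction n as [|n IH]; simpl; rewrite Hstep; [|rewrite IH; reflexivity].
  rewrite Upto_0.
  replace (setI C (@set0 T)) with (@set0 T) by (apply set_ext; intro x; unfold setI, set0; tauto).
  rewrite (ba_0 Alg nu HA Hnu). ring.
Qed.

Lemma series_pieces C : Alg C ->
  (forall eps, 0 < eps -> exists N, forall n, (N <= n)%nat ->
     Rabs (nu (setD C (Upto Hs n))) < eps) ->
  infinite_sum (fun k => nu (setI C (Gn Hs k))) (nu C).
Proof.
  intros HC Htail eps Heps. destruct (Htail eps Heps) as [N HN].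
  exists N. intros n Hn. unfold R_dist.
  rewrite partial_sum_pieces, (ba_split Alg nu HA Hnu C (Upto Hs (S n))) by auto.
  set (U := Upto Hs (S n)).
  replace (nu (setI C U) - (nu (setI C U) + nu (setD C U))) with (- nu (setD C U)) by ring.
  rewrite Rabs_Ropp. apply HN. lia.
Qed.

End SeriesAlongPieces.

Definition exhausts {T} (v : set T -> R) (H0 : set T -> Prop) (Hs : nat -> set T) : Prop :=
  forall d, 0 < d -> exists N, forall n, (N <= n)%nat -> forall X, H0 X ->
    v (setD X (Upto Hs n)) < d.

Section GreedyExhaustion.
Context {T : Type} (Alg : set T -> Prop) (v : set T -> R) (H0 : set T -> Prop).
Hypothesis HA : is_algebra Alg.
Hypothesis Hv : is_ba Alg v.
Hypothesis Hvpos : forall A, Alg A -> 0 <= v A.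
Hypothesis HH0 : forall X, H0 X -> Alg X.
Hypothesis Hne : exists X, H0 X.

Definition near_max (U : set T) (n : nat) : set T :=
  epsilon (inhabits set0) (fun Y => H0 Y /\ forall X, H0 X ->
    v (setD X U) <= v (setD Y U) + / INR (S n)).

Lemma near_max_spec U n : Alg U ->
  H0 (near_max U n) /\ forall X, H0 X ->
    v (setD X U) <= v (setD (near_max U n) U) + / INR (S n).
Proof.
  intros HU. unfold near_max. apply epsilon_spec.
  destruct (ba_bounded_above Alg v Hv) as [K HK]. destruct Hne as [X0 HX0].
  destruct (approx_sup (fun r => exists X, H0 X /\ r = v (setD X U))) with (eps := / INR (S n))
    as [r [[Y [HY ->]] HYmax]].
  - exists K. intros r [X [HX ->]]. apply HK. auto.
  - exists (v (setD X0 U)), X0; auto.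
  - apply Rinv_0_lt_compat, lt_0_INR; lia.
  - exists Y. split; auto. intros X HX. apply HYmax. exists X; auto.
Qed.

Fixpoint greedy_upto (n : nat) : set T :=
  match n with
  | O => set0
  | S n => setU (greedy_upto n) (near_max (greedy_upto n) n)
  end.

Definition greedy (n : nat) : set T := near_max (greedy_upto n) n.

Lemma greedy_upto_alg n : Alg (greedy_upto n).
Proof.
  induction n; simpl; auto.
  apply alg_U; auto. apply HH0, (near_max_spec _ n IHn).
Qed.

Lemma greedy_H0 n : H0 (greedy n).
Proof. apply (near_max_spec _ n (greedy_upto_alg n)). Qed.

Lemma greedy_alg n : Alg (greedy n).
Proof. apply HH0, greedy_H0. Qed.

Lemma greedy_upto_eq n : greedy_upto n = Upto greedy n.
Proof. induction n; simpl; [rewrite Upto_0 | rewrite Upto_succ, <- IHn]; reflexivity. Qed.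

Lemma greedy_near_max n X : H0 X ->
  v (setD X (Upto greedy n)) <= v (Gn greedy n) + / INR (S n).
Proof.
  intros HX. rewrite Gn_Upto, <- greedy_upto_eq.
  apply (near_max_spec _ n (greedy_upto_alg n)); auto.
Qed.

(* v(U_n) increases to a finite limit, so its increments v(G_n) tend to 0. *)
Lemma greedy_pieces_vanish eps : 0 < eps ->
  exists N, forall n, (N <= n)%nat -> v (Gn greedy n) <= eps.
Proof.
  intros Heps. destruct (ba_bounded_above Alg v Hv) as [K HK].
  destruct (approx_sup (fun r => exists n, r = v (Upto greedy n))) with (eps := eps)
    as [r [[N ->] HNmax]]; auto.
  - exists K. intros r [n ->]. apply HK. apply Upto_alg; auto. exact greedy_alg.
  - exists (v (Upto greedy 0)), 0%nat; auto.
  - exists N. intros n Hn.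
    assert (Hsucc : v (Upto greedy (S n)) = v (Upto greedy n) + v (Gn greedy n)).
    { rewrite Upto_succ_Gn. apply (ba_add Alg v Hv); try apply Upto_Gn_disjoint;
        [apply Upto_alg | apply Gn_alg]; auto; exact greedy_alg. }
    assert (Hmono : v (Upto greedy N) <= v (Upto greedy n)).
    { apply (ba_mono Alg v HA Hv Hvpos); try apply Upto_mono; auto;
        apply Upto_alg; auto; exact greedy_alg. }
    pose proof (HNmax (v (Upto greedy (S n))) (ex_intro _ (S n) eq_refl)). lra.
Qed.

Lemma greedy_exhausts : exhausts v H0 greedy.
Proof.
  intros d Hd. destruct (greedy_pieces_vanish (d / 2)) as [N1 HN1]; [lra|].
  destruct (archimed_cor1 (d / 2)) as [N2 [HN2 HN2pos]]; [lra|].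
  exists (max N1 N2). intros n Hn X HX.
  pose proof (greedy_near_max n X HX). pose proof (HN1 n ltac:(lia)).
  assert (/ INR (S n) <= / INR N2).
  { apply Rinv_le_contravar; [apply lt_0_INR; auto | apply le_INR; lia]. }
  lra.
Qed.

End GreedyExhaustion.

Lemma exhausting_sequence {T} (Alg : set T -> Prop) (v : set T -> R) (H0 : set T -> Prop) :
  is_algebra Alg -> is_ba Alg v -> (forall A, Alg A -> 0 <= v A) ->
  (forall X, H0 X -> Alg X) -> (exists X, H0 X) ->
  exists Hs : nat -> set T, (forall n, H0 (Hs n)) /\ exhausts v H0 Hs.
Proof.
  intros HA Hv Hvpos HH0 Hne. exists (greedy v H0).
  split; [apply (greedy_H0 Alg) | apply (greedy_exhausts Alg)]; auto.
Qed.

Section ExhaustedRing.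
Context {T : Type} (Alg : set T -> Prop) (v : set T -> R) (Hs : nat -> set T).
Hypothesis HA : is_algebra Alg.
Hypothesis Hv : is_ba Alg v.
Hypothesis Hvpos : forall A, Alg A -> 0 <= v A.
Hypothesis HsAlg : forall n, Alg (Hs n).

Definition exhausted (B : set T) : Prop :=
  Alg B /\ forall d, 0 < d -> exists N, forall n, (N <= n)%nat -> v (setD B (Upto Hs n)) < d.

Lemma exhausted_ring : is_ring exhausted.
Proof.
  assert (Hmono := ba_mono Alg v HA Hv Hvpos).
  split; [|split].
  - split; auto. intros d Hd. exists 0%nat. intros n _.
    replace (setD set0 (Upto Hs n)) with (@set0 T)
      by (apply set_ext; unfold setD, set0; tauto).
    rewrite (ba_0 Alg v HA Hv). exact Hd.
  - intros B C [HB HBex] [HC HCex]. split; auto. intros d Hd.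
    destruct (HBex (d / 2)) as [N1 HN1]; [lra|]. destruct (HCex (d / 2)) as [N2 HN2]; [lra|].
    exists (max N1 N2). intros n Hn.
    specialize (HN1 n ltac:(lia)). specialize (HN2 n ltac:(lia)).
    assert (HU : Alg (Upto Hs n)) by auto.
    replace (setD (setU B C) (Upto Hs n))
      with (setU (setD B (Upto Hs n)) (setD (setD C (Upto Hs n)) B)).
    + rewrite (ba_add Alg v Hv); auto; [|intros x [h1 _] [_ h2]; auto].
      assert (v (setD (setD C (Upto Hs n)) B) <= v (setD C (Upto Hs n))).
      { apply Hmono; auto. intros x [h _]; exact h. }
      lra.
    + apply set_ext; intro x; unfold setU, setD.
      destruct (classic (B x)); tauto.
  - intros B C [HB HBex] [HC _]. split; auto. intros d Hd.
    destruct (HBex d Hd) as [N HN]. exists N. intros n Hn.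
    eapply Rle_lt_trans; [|exact (HN n Hn)]. apply Hmono; auto.
    intros x [[h _] h']. split; auto.
Qed.

Lemma gen_ring_exhausted (H0 : set T -> Prop) H :
  (forall X, H0 X -> Alg X) -> exhausts v H0 Hs -> gen_ring H0 H -> exhausted H.
Proof.
  intros HH0 Hex Hgen. apply Hgen; [exact exhausted_ring|].
  intros X HX. split; auto. intros d Hd.
  destruct (Hex d Hd) as [N HN]. exists N. intros n Hn. auto.
Qed.

End ExhaustedRing.

Section AbsolutelyContinuous.
Context {T : Type} (Alg : set T -> Prop) (lam mu : set T -> R) (Hs : nat -> set T).
Hypothesis HA : is_algebra Alg.
Hypothesis Hlam : is_ba Alg lam.
Hypothesis Hmu : is_ba Alg mu.
Hypothesis Hac : abs_cont Alg mu lam.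
Hypothesis HsAlg : forall n, Alg (Hs n).

Lemma abs_cont_variation eps : 0 < eps -> exists d, 0 < d /\
  forall C, Alg C -> variation Alg lam C < d -> totvar Alg mu C < eps.
Proof.
  intros Heps. destruct (Hac eps Heps) as [d [Hd Hsmall]].
  exists d. split; auto. intros C HC HvC. apply Hsmall; auto.
  eapply Rle_lt_trans; [apply totvar_le_variation; auto | exact HvC].
Qed.

Lemma tail_totvar_small B : exhausted Alg (variation Alg lam) Hs B ->
  forall eps, 0 < eps -> exists N, forall n, (N <= n)%nat -> forall C, Alg C -> subset C B ->
    totvar Alg mu (setD C (Upto Hs n)) < eps.
Proof.
  intros [HB HBex] eps Heps.
  destruct (abs_cont_variation eps Heps) as [d [Hd Hsmall]].
  destruct (HBex d Hd) as [N HN]. exists N. intros n Hn C HC HCB.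
  assert (HU : Alg (Upto Hs n)) by auto.
  apply Hsmall; auto. eapply Rle_lt_trans; [|exact (HN n Hn)].
  apply (ba_mono Alg (variation Alg lam) HA (variation_ba Alg lam HA Hlam)
           (variation_nonneg Alg lam HA Hlam)); auto.
  intros x [hx hU]. split; auto.
Qed.

(* |mu|^*(B n G) = 0: B n G lies in every tail B \ U_n. *)
Lemma outer_remainder_null B : exhausted Alg (variation Alg lam) Hs B ->
  outer Alg mu (setI B (Gset Hs)) = 0.
Proof.
  intros Hex. pose proof (proj1 Hex) as HB. apply Rinf_eq. split.
  - intros r [A [HAa [_ ->]]]. apply (totvar_nonneg Alg mu); auto.
  - intros b Hb. apply Rnot_lt_le. intros Hbpos.
    destruct (tail_totvar_small B Hex b Hbpos) as [N HN].
    assert (HU : Alg (Upto Hs N)) by auto.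
    assert (b <= totvar Alg mu (setD B (Upto Hs N))).
    { apply Hb. exists (setD B (Upto Hs N)).
      split; [auto | split; [apply Gset_out_of_Upto | reflexivity]]. }
    pose proof (HN N (le_n N) B HB (fun x h => h)). lra.
Qed.

Lemma series_on_exhausted A B : Alg A -> exhausted Alg (variation Alg lam) Hs B ->
  infinite_sum (fun n => mu (setI A (setI B (Gn Hs n)))) (mu (setI A B)).
Proof.
  intros HAa Hex. pose proof (proj1 Hex) as HB.
  replace (fun n => mu (setI A (setI B (Gn Hs n))))
    with (fun n => mu (setI (setI A B) (Gn Hs n))).
  2:{ apply functional_extensionality; intro n. f_equal.
      apply set_ext; intro x; unfold setI; tauto. }
  apply (series_pieces Alg); auto. intros eps Heps.
  destruct (tail_totvar_small B Hex eps Heps) as [N HN]. exists N. intros n Hn.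
  assert (HU : Alg (Upto Hs n)) by auto.
  eapply Rle_lt_trans; [apply (abs_le_totvar Alg mu); auto|].
  apply HN; auto. intros x [_ h]; exact h.
Qed.

(* Part (i): for H0-inner regular mu, the members of H0 inside A \ U_n are uniformly
   small, hence so are mu^+(A \ U_n), mu^-(A \ U_n) and mu(A \ U_n). *)
Lemma series_inner_regular (H0 : set T -> Prop) :
  (forall X, H0 X -> Alg X) -> exhausts (variation Alg lam) H0 Hs ->
  inner_regular Alg H0 mu ->
  forall A, Alg A -> infinite_sum (fun n => mu (setI A (Gn Hs n))) (mu A).
Proof.
  intros HH0 Hex Hreg A HAa. apply (series_pieces Alg); auto. intros eps Heps.
  destruct (abs_cont_variation (eps / 2)) as [d [Hd Hsmall]]; [lra|].
  destruct (Hex d Hd) as [N HN]. exists N. intros n Hn.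
  assert (HU : Alg (Upto Hs n)) by auto.
  set (B := setD A (Upto Hs n)). assert (HB : Alg B) by (unfold B; auto).
  assert (Hmember : forall X, H0 X -> subset X B -> Rabs (mu X) <= eps / 2).
  { intros X HX HXB. assert (HXa : Alg X) by auto.
    apply Rlt_le. eapply Rle_lt_trans; [apply (abs_le_totvar Alg mu); auto|].
    apply Hsmall; auto.
    replace X with (setD X (Upto Hs n)) by
      (apply set_ext; intro x; unfold setD; split; [tauto | intro h; split; auto; apply (HXB x h)]).
    apply HN; auto. }
  destruct (Hreg B HB) as [[_ Hpos] [_ Hneg]].
  assert (mu_pos Alg mu B <= eps / 2).
  { apply Hpos. intros r [X [HX [HXB ->]]].
    pose proof (Rle_abs (mu X)); pose proof (Hmember X HX HXB); lra. }
  assert (mu_neg Alg mu B <= eps / 2).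
  { apply Hneg. intros r [X [HX [HXB ->]]].
    pose proof (Rle_abs (- mu X)); rewrite Rabs_Ropp in *.
    pose proof (Hmember X HX HXB); lra. }
  assert (mu B <= mu_pos Alg mu B) by (apply (mu_pos_ge Alg mu); auto; intros x h; exact h).
  assert (- mu B <= mu_neg Alg mu B).
  { apply (mu_pos_ge Alg (fun B => - mu B) (ba_opp Alg mu Hmu)); auto. intros x h; exact h. }
  apply Rle_lt_trans with (eps / 2); [apply Rabs_le; lra | lra].
Qed.

Lemma series_with_remainder A : Alg A ->
  exhausted Alg (variation Alg lam) Hs (fun x => exists n, Hs n x) ->
  exists l, infinite_sum (fun n => mu (setI A (Gn Hs n))) l /\
            mu A = mu (setI A (Gset Hs)) + l.
Proof.
  intros HAa Hex. set (V := fun x => exists n, Hs n x).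
  assert (HV : Alg V) by exact (proj1 Hex).
  exists (mu (setI A V)). split.
  - replace (fun n => mu (setI A (Gn Hs n))) with (fun n => mu (setI A (setI V (Gn Hs n)))).
    + apply series_on_exhausted; auto.
    + apply functional_extensionality; intro n. f_equal. apply set_ext; intro x.
      unfold setI, V, Gn. split; [tauto|]. intros [h1 [h2 h3]]. eauto.
  - (* A n G = A n ~V, which is A \ V by definition *)
    rewrite Gset_complement, (ba_split Alg mu HA Hmu A V HAa HV), Rplus_comm.
    reflexivity.
Qed.

End AbsolutelyContinuous.

Theorem mainTheorem16 (Omega : Type) (Alg : set Omega -> Prop) (lam : set Omega -> R)
  (M : (set Omega -> R) -> Prop) (H0 : set Omega -> Prop) :
  is_algebra Alg ->
  is_ba Alg lam ->
  (forall mu, M mu -> is_ba Alg mu /\ abs_cont Alg mu lam) ->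
  (forall X, H0 X -> Alg X) ->
  (exists X, H0 X) ->
  exists Hs : nat -> set Omega,
    (forall n, H0 (Hs n)) /\
    (forall mu A H, M mu -> Alg A -> gen_ring H0 H ->
       outer Alg mu (setI H (Gset Hs)) = 0 /\
       infinite_sum (fun n => mu (setI A (setI H (Gn Hs n)))) (mu (setI A H))) /\
    (forall mu, M mu -> inner_regular Alg H0 mu ->
       forall A, Alg A -> infinite_sum (fun n => mu (setI A (Gn Hs n))) (mu A)) /\
    ((forall S : nat -> set Omega, (forall n, H0 (S n)) -> H0 (fun x => exists n, S n x)) ->
       forall mu A, M mu -> Alg A ->
       exists l, infinite_sum (fun n => mu (setI A (Gn Hs n))) l /\
                 mu A = mu (setI A (Gset Hs)) + l).
Proof.
  intros HA Hlam HM HH0 Hne.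
  pose proof (variation_ba Alg lam HA Hlam) as Hv.
  pose proof (variation_nonneg Alg lam HA Hlam) as Hvpos.
  destruct (exhausting_sequence Alg (variation Alg lam) H0 HA Hv Hvpos HH0 Hne)
    as [Hs [HsH0 Hex]].
  assert (HsAlg : forall n, Alg (Hs n)) by auto.
  assert (Hring : forall H, gen_ring H0 H -> exhausted Alg (variation Alg lam) Hs H)
    by (intros H; apply gen_ring_exhausted; auto).
  exists Hs. split; [exact HsH0|]. split; [|split].
  - intros mu A H Hmu HAa Hgen. destruct (HM mu Hmu) as [Hba Hac].
    pose proof (Hring H Hgen) as HexH.
    split; [eapply (outer_remainder_null Alg lam) | eapply (series_on_exhausted Alg lam)]; eauto.
  - intros mu Hmu Hreg. destruct (HM mu Hmu) as [Hba Hac].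
    eapply (series_inner_regular Alg lam); eauto.
  - (* the union of the H_n lies in H0, hence in the generated ring *)
    intros Hcup mu A Hmu HAa. destruct (HM mu Hmu) as [Hba Hac].
    eapply (series_with_remainder Alg lam); eauto.
    apply Hring. intros Rg _ HRg. apply HRg, Hcup, HsH0.
Qed.
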